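(* Let $N$ be a prime number and $n,t,s$ positive integers with $t\le n$ and $N\ge s+1$. Let $\vec u_1,\dots,\vec u_t\in\mathbb{Z}_N^n$ be linearly independent over $\mathbb{Z}_N$. Let $Q(s)=\{\vec x=(x_1,\dots,x_n)\in\mathbb{Z}_N^n: x_i\in\{0,1,\dots,s\},\ i=1,\dots,n\}$ and $L=\{\sum_{i=1}^t m_i\vec u_i: m_i\in\mathbb{Z}_N\}$. Then $|L\cap Q(s)|\le(s+1)^t$.
   Context: $\mathbb{Z}_N=\mathbb{Z}/N\mathbb{Z}$, viewed as the field with $N$ elements. *)

From HB Require Import structures.
From mathcomp Require Import all_boot all_order all_algebra.
Set Implicit Arguments. Unset Strict Implicit. Unset Printing Implicit Defensive.
Import Order.TTheory GRing.Theory Num.Theory.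
Local Open Scope ring_scope.

Definition Qcube (N n s : nat) : {set 'rV['F_N]_n} :=
  [set x : 'rV['F_N]_n | [forall i : 'I_n, [exists k : 'I_s.+1, x 0 i == (k : nat)%:R]]].

Definition Llat (N n t : nat) (u : t.-tuple 'rV['F_N]_n) : {set 'rV['F_N]_n} :=
  [set v : 'rV['F_N]_n | [exists m : 'rV['F_N]_t, v == \sum_(i < t) m 0 i *: tnth u i]].

(* The generators u_1, ..., u_t are the rows of a t x n matrix U of rank t, so some t columns
   of U form an invertible matrix.  Projecting onto these t coordinates is therefore
   injective on L, and it maps L ∩ Q(s) into the t-dimensional box {0, ..., s}^t. *)
From HB Require Import structures.
From mathcomp Require Import all_boot all_order all_algebra.
Set Implicit Arguments. Unset Strict Implicit. Unset Printing Implicit Defensive.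
Import GRing.Theory.
Local Open Scope ring_scope.

Lemma card_row_box (R : finType) (r : nat) (S : {pred R}) (A : {set 'rV[R]_r}) :
  (forall v, v \in A -> forall k, v 0 k \in S) -> (#|A| <= #|S| ^ r)%N.
Proof.
move=> A_S; pose ffun_of (v : 'rV[R]_r) := [ffun k => v 0 k].
have ffun_of_inj : injective ffun_of.
  by move=> v w /ffunP vw; apply/rowP => k; have := vw k; rewrite !ffunE.
rewrite -(card_imset A ffun_of_inj) -[r in (_ ^ r)%N]card_ord -card_ffun_on.
apply/subset_leq_card/subsetP => _ /imsetP [v vA ->]; apply/ffun_onP => k.
by rewrite ffunE A_S.
Qed.

Lemma row_free_colsub_unitmx (F : fieldType) (t n : nat) (U : 'M[F]_(t, n)) :
  row_free U -> exists f : 'I_n ^ t, colsub f U \in unitmx.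
Proof.
move=> freeU; have fullUT : row_full U^T by rewrite /row_full mxrank_tr.
exists (fullrankfun fullUT).
by rewrite -unitmx_tr trmx_mxsub fullrowsub_unit.
Qed.

Lemma free_row_free (F : fieldType) (t n : nat) (u : t.-tuple 'rV[F]_n) :
  free u -> row_free (\matrix_(i < t) tnth u i).
Proof.
move=> /freeP free_u; apply/inj_row_free => m; rewrite mulmx_sum_row => m0.
apply/rowP => i; rewrite [RHS]mxE; apply: (free_u (fun i => m 0 i)).
by rewrite -[RHS]m0; apply: eq_bigr => k _; rewrite rowK (tnth_nth 0).
Qed.

Lemma mem_Llat (N n t : nat) (u : t.-tuple 'rV['F_N]_n) (v : 'rV['F_N]_n) :
  (v \in Llat u) = [exists m, v == m *m \matrix_(i < t) tnth u i].
Proof.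
rewrite inE; apply: eq_existsb => m; rewrite mulmx_sum_row.
by congr (_ == _); apply: eq_bigr => i _; rewrite rowK.
Qed.

Lemma mem_Qcube (N n s : nat) (x : 'rV['F_N]_n) :
  x \in Qcube N n s -> forall i, x 0 i \in codom (fun k : 'I_s.+1 => (k : nat)%:R).
Proof.
by rewrite inE => /forallP x_box i; have /existsP [k /eqP ->] := x_box i; apply: codom_f.
Qed.

Theorem lemma24 (N n t s : nat) (u : t.-tuple 'rV['F_N]_n) :
  prime N -> (0 < n)%N -> (0 < t)%N -> (0 < s)%N -> (t <= n)%N -> (s.+1 <= N)%N ->
  free u ->
  (#|Llat u :&: Qcube N n s| <= s.+1 ^ t)%N.
Proof.
move=> _ _ t_gt0 _ _ _ free_u.
have [f] := row_free_colsub_unitmx (free_row_free free_u).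
rewrite -row_free_unit => /row_free_inj Uf_inj.
have colsub_inj : {in Llat u :&: Qcube N n s &, injective (colsub f)}.
  move=> v w /setIP [+ _] /setIP [+ _]; rewrite !mem_Llat.
  move=> /existsP [m /eqP ->] /existsP [m' /eqP ->]; rewrite -!mulmx_colsub.
  by move/Uf_inj ->.
rewrite -(card_in_imset colsub_inj).
pose box := codom (fun k : 'I_s.+1 => (k : nat)%:R : 'F_N).
apply: (@leq_trans (#|box| ^ t)%N); first apply: card_row_box.
  move=> _ /imsetP [v /setIP [_ vQ] ->] k.
  by rewrite mxE; apply: mem_Qcube vQ (f k).
by rewrite leq_exp2r // (leq_trans (card_size _)) // size_codom card_ord.
Qed.
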